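(* Let $Y,\widehat{Y},A$ be $\{0,1\}$-valued random variables on a common probability space, with $\Pr\{A=a,Y=y\}>0$ for all $a,y\in\{0,1\}$. For $a\in\{0,1\}$ let $P_a(\widehat{Y})=\mathrm{convhull}\{(0,0),\gamma_a(\widehat{Y}),\gamma_a(1-\widehat{Y}),(1,1)\}\subseteq\mathbb{R}^2$. Then: (i) every predictor $\widetilde{Y}$ derived from $(\widehat{Y},A)$ satisfies $\gamma_a(\widetilde{Y})\in P_a(\widehat{Y})$ for all $a\in\{0,1\}$; and (ii) conversely, for any points $g_0\in P_0(\widehat{Y})$ and $g_1\in P_1(\widehat{Y})$ there exists a predictor $\widetilde{Y}$ derived from $(\widehat{Y},A)$ with $\gamma_0(\widetilde{Y})=g_0$ and $\gamma_1(\widetilde{Y})=g_1$.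
   Context: For a $\{0,1\}$-valued predictor $Z$ and $a\in\{0,1\}$, $\gamma_a(Z)=\left(\Pr\{Z=1\mid A=a,Y=0\},\ \Pr\{Z=1\mid A=a,Y=1\}\right)$ (false positive rate and true positive rate within the group $A=a$). A predictor $\widetilde{Y}\in\{0,1\}$ is derived from $(\widehat{Y},A)$ if it is a possibly randomized function of $(\widehat{Y},A)$ alone, with the randomization independent of everything else; equivalently it is specified by the four numbers $\Pr\{\widetilde{Y}=1\mid \widehat{Y}=\hat y,A=a\}\in[0,1]$, $\hat y,a\in\{0,1\}$. *)

From HB Require Import structures.
From mathcomp Require Import all_boot all_order all_algebra.
From mathcomp Require Import all_classical all_reals all_analysis.
Set Implicit Arguments. Unset Strict Implicit. Unset Printing Implicit Defensive.
Import Order.TTheory GRing.Theory Num.Theory.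
Local Open Scope classical_set_scope.
Local Open Scope ring_scope.

Section Defs.
Context {d : measure_display} {T : measurableType d} {R : realType}.

Definition pr (P : probability T R) (E : set T) : R := fine (P E).

Definition condPr (P : probability T R) (E F : set T) : R :=
  pr P (E `&` F) / pr P F.

Definition evAY (A Y : T -> bool) (a y : bool) : set T :=
  [set w | A w = a /\ Y w = y].

(* gamma_a(Z) = (Pr{Z=1 | A=a,Y=0}, Pr{Z=1 | A=a,Y=1}) for a {0,1}-valued
   predictor Z (true encodes 1) *)
Definition gamma (P : probability T R) (A Y Z : T -> bool) (a : bool) : R * R :=
  (condPr P [set w | Z w] (evAY A Y a false),
   condPr P [set w | Z w] (evAY A Y a true)).

(* A derived predictor Ytilde is specified by q : bool -> bool -> R with
   q yh a = Pr{Ytilde = 1 | Yhat = yh, A = a} in [0,1], the randomization being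
   independent of everything else.  Its conditional probabilities are
   Pr{Ytilde=1 | A=a, Y=y}
     = sum_yh q yh a * Pr{Yhat=yh, A=a, Y=y} / Pr{A=a, Y=y}. *)
Definition derived_condPr (P : probability T R) (A Y Yh : T -> bool)
  (q : bool -> bool -> R) (a y : bool) : R :=
  (\sum_(yh : bool) q yh a * pr P ([set w | Yh w = yh] `&` evAY A Y a y))
  / pr P (evAY A Y a y).

Definition gamma_derived (P : probability T R) (A Y Yh : T -> bool)
  (q : bool -> bool -> R) (a : bool) : R * R :=
  (derived_condPr P A Y Yh q a false, derived_condPr P A Y Yh q a true).

Definition is_derived_rule (q : bool -> bool -> R) : Prop :=
  forall yh a, 0 <= q yh a <= 1.

End Defs.

Definition convhull4 {R : realType} (p0 p1 p2 p3 : R * R) : set (R * R) :=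
  [set g | exists l0 l1 l2 l3 : R,
     [/\ 0 <= l0, 0 <= l1, 0 <= l2 & 0 <= l3] /\ l0 + l1 + l2 + l3 = 1 /\
     g = (l0 * p0.1 + l1 * p1.1 + l2 * p2.1 + l3 * p3.1,
          l0 * p0.2 + l1 * p1.2 + l2 * p2.2 + l3 * p3.2)].

Definition Pa {d : measure_display} {T : measurableType d} {R : realType}
  (P : probability T R) (A Y Yh : T -> bool) (a : bool) : set (R * R) :=
  convhull4 (0, 0) (gamma P A Y Yh a) (gamma P A Y (fun w => ~~ Yh w) a) (1, 1).

From HB Require Import structures.
From mathcomp Require Import all_boot all_order all_algebra.
From mathcomp Require Import all_classical all_reals all_analysis.
From mathcomp Require Import ring lra.
Set Implicit Arguments. Unset Strict Implicit. Unset Printing Implicit Defensive.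
Import Order.TTheory GRing.Theory Num.Theory.
Local Open Scope classical_set_scope.
Local Open Scope ring_scope.

(* Since gamma_a(1 - Yhat) = (1,1) - gamma_a(Yhat), a derived predictor that
   outputs 1 with probability s when Yhat = 1 and with probability t when
   Yhat = 0 has gamma_a = s gamma_a(Yhat) + t ((1,1) - gamma_a(Yhat)).  As s, t
   range over [0,1] these points sweep out exactly the parallelogram with
   vertices (0,0), gamma_a(Yhat), gamma_a(1 - Yhat), (1,1), and the rule can be
   chosen independently for the two groups. *)

Definition mix_compl {R : realType} (s t : R) (p : R * R) : R * R :=
  (s * p.1 + t * (1 - p.1), s * p.2 + t * (1 - p.2)).

Lemma convhull4_complP (R : realType) (p g : R * R) :
  convhull4 (0, 0) p (1 - p.1, 1 - p.2) (1, 1) g <->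
  exists s t : R, [/\ 0 <= s <= 1, 0 <= t <= 1 & g = mix_compl s t p].
Proof.
split.
  move=> [l0 [l1 [l2 [l3 [[l0_ge0 l1_ge0 l2_ge0 l3_ge0] [l_sum1 ->]]]]]].
  exists (l1 + l3), (l2 + l3); split; try (apply/andP; split; lra).
  by rewrite /mix_compl /=; congr pair; ring.
move=> [s [t [/andP[s_ge0 s_le1] /andP[t_ge0 t_le1] ->]]].
have [t_le_s | s_lt_t] := leP t s.
  exists (1 - s), (s - t), 0, t; split; [split; lra | split; first by ring].
  by rewrite /mix_compl /=; congr pair; ring.
exists (1 - t), 0, (t - s), s; split; [split; lra | split; first by ring].
by rewrite /mix_compl /=; congr pair; ring.
Qed.

Section ConditionalProbability.
Context {d : measure_display} {T : measurableType d} {R : realType}.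
Variable P : probability T R.

Lemma measurable_bool_preimage (X : T -> bool) (b : bool) :
  measurable_fun [set: T] X -> measurable [set w | X w = b].
Proof. by move=> mX; have := mX measurableT [set b] I; rewrite setTI. Qed.

Lemma pr_gt0 (E : set T) : measurable E -> (0 < P E)%E -> 0 < pr P E.
Proof.
move=> mE PE_gt0; apply: fine_gt0; rewrite PE_gt0 /=.
by rewrite (le_lt_trans (probability_le1 P mE)) ?ltry.
Qed.

Lemma pr_setDI (E B : set T) : measurable E -> measurable B ->
  pr P E = pr P (E `\` B) + pr P (E `&` B).
Proof.
move=> mE mB; rewrite /pr (measureDI P mE mB) fineD //.
  by apply: fin_num_measure; exact: measurableD.
by apply: fin_num_measure; exact: measurableI.
Qed.

Lemma condPrC (B F : set T) : measurable B -> measurable F -> pr P F != 0 ->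
  condPr P (~` B) F = 1 - condPr P B F.
Proof.
move=> mB mF PF_neq0.
rewrite /condPr (setIC (~` B)) -setDE (setIC B).
by move: PF_neq0; rewrite (pr_setDI mF mB) => PF_neq0; field.
Qed.

End ConditionalProbability.

Section DerivedPredictor.
Context {d : measure_display} {T : measurableType d} {R : realType}.
Variables (P : probability T R) (A Y X : T -> bool).
Hypotheses (mA : measurable_fun [set: T] A) (mY : measurable_fun [set: T] Y)
  (mX : measurable_fun [set: T] X).
Hypothesis evAY_gt0 : forall a y, (0 < P (evAY A Y a y))%E.

Let measurable_evAY a y : measurable (evAY A Y a y).
Proof.
by apply: measurableI; apply: measurable_bool_preimage.
Qed.

Let measurable_X : measurable [set w | X w].
Proof. exact: measurable_bool_preimage. Qed.

Let condPrC_evAY a y :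
  condPr P (~` [set w | X w]) (evAY A Y a y) =
  1 - condPr P [set w | X w] (evAY A Y a y).
Proof. by rewrite condPrC // gt_eqF // pr_gt0. Qed.

Lemma gamma_negb a :
  gamma P A Y (fun w => ~~ X w) a =
  (1 - (gamma P A Y X a).1, 1 - (gamma P A Y X a).2).
Proof.
rewrite /gamma; have -> : [set w | ~~ X w] = ~` [set w | X w].
  by apply/seteqP; split => w /=; case: (X w).
by rewrite !condPrC_evAY.
Qed.

Lemma gamma_derivedE (q : bool -> bool -> R) a :
  gamma_derived P A Y X q a = mix_compl (q true a) (q false a) (gamma P A Y X a).
Proof.
rewrite /gamma_derived /derived_condPr !big_bool.
have -> : [set w | X w = false] = ~` [set w | X w].
  by apply/seteqP; split => w /=; case: (X w).
by rewrite /mix_compl -!condPrC_evAY /gamma /condPr /= !mulrDl !mulrA.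
Qed.

End DerivedPredictor.

Theorem lemma4p3 (d : measure_display) (T : measurableType d) (R : realType)
  (P : probability T R) (Y Yh A : T -> bool)
  (mY : measurable_fun [set: T] Y) (mYh : measurable_fun [set: T] Yh)
  (mA : measurable_fun [set: T] A)
  (hpos : forall a y : bool, (0 < P (evAY A Y a y))%E) :
  (forall q : bool -> bool -> R, is_derived_rule q ->
     forall a : bool, Pa P A Y Yh a (gamma_derived P A Y Yh q a)) /\
  (forall g0 g1 : R * R, Pa P A Y Yh false g0 -> Pa P A Y Yh true g1 ->
     exists q : bool -> bool -> R, is_derived_rule q /\
       gamma_derived P A Y Yh q false = g0 /\
       gamma_derived P A Y Yh q true = g1).
Proof.
have PaP a g : Pa P A Y Yh a g <->
    exists s t : R, [/\ 0 <= s <= 1, 0 <= t <= 1 & g = mix_compl s t (gamma P A Y Yh a)].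
  by rewrite /Pa gamma_negb //; exact: convhull4_complP.
split=> [q q01 a | g0 g1 /PaP[s0 [t0 [s0_01 t0_01 ->]]] /PaP[s1 [t1 [s1_01 t1_01 ->]]]].
  by apply/PaP; exists (q true a), (q false a); rewrite gamma_derivedE.
exists (fun yh a => if a then (if yh then s1 else t1) else (if yh then s0 else t0)).
by split; [case; case | rewrite !gamma_derivedE].
Qed.
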